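(* Let $(I,\leq)$ and $(J,\preccurlyeq)$ be finite posets and $\mathcal P\colon J^{\mathrm{op}}\to\mathrm{Fun}(I,\mathrm{vect}_K)$ a functor. If $\mathcal P$ is thin (respectively flat), then for every subposet $L\subseteq J$ the restriction of $\mathcal P$ to $L^{\mathrm{op}}\subseteq J^{\mathrm{op}}$ is also thin (respectively flat).
   Context: $K$ is a field, $\mathrm{vect}_K$ finite-dimensional $K$-vector spaces, $\mathrm{Fun}(I,\mathrm{vect}_K)$ the category of functors $I\to\mathrm{vect}_K$ with natural transformations (hom sets $\mathrm{Nat}_I$). For any finite poset $J$ and functor $\mathcal P\colon J^{\mathrm{op}}\to\mathrm{Fun}(I,\mathrm{vect}_K)$: for $a\in J$, $K(a,-)\colon J\to\mathrm{vect}_K$ is the free functor ($K(a,b)=K$ if $a\preccurlyeq b$, else $0$, identity transitions between nonzero values); $\mathcal R M=\mathrm{Nat}_I(\mathcal P(-),M)$ defines $\mathcal R\colon\mathrm{Fun}(I,\mathrm{vect}_K)\to\mathrm{Fun}(J,\mathrm{vect}_K)$ with left adjoint $\mathcal L$ (given by $\mathcal LF=\mathrm{colim}\big(\bigoplus_{a_0\prec a_1}\mathcal P(a_1)\otimes F(a_0)\rightrightarrows\bigoplus_a\mathcal P(a)\otimes F(a)\big)$), so $\mathcal LK(a,-)\cong\mathcal P(a)$ and $\mathcal R\mathcal LK(a,-)\cong\mathrm{Nat}_I(\mathcal P(-),\mathcal P(a))$; $\eta_a\colon K(a,-)\to\mathcal R\mathcal LK(a,-)$ is the unit. $\mathcal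 P$ is thin if $\eta_a$ is an epimorphism (pointwise surjective) for every $a\in J$, and flat if $\eta_a$ is an isomorphism for every $a\in J$ with $\mathcal P(a)\neq0$. *)

From HB Require Import structures.
From mathcomp Require Import all_boot all_order all_algebra.
Set Implicit Arguments. Unset Strict Implicit. Unset Printing Implicit Defensive.
Import GRing.Theory.
Local Open Scope ring_scope.

(* Finite posets are finTypes with a boolean relation; the poset axioms are
   hypotheses of the theorem.  A finite-dimensional K-vector space is K^n,
   represented by row vectors 'rV[K]_n; linear maps K^m -> K^n are matrices
   'M[K]_(m,n) acting on the right (v |-> v *m A). *)

Definition is_poset (T : finType) (le : rel T) : Prop :=
  [/\ reflexive le, antisymmetric le & transitive le].

(* A functor I -> vect_K.  The values of vmap at pairs i, j with ~~ leI i j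
   are junk and never used. *)
Record vfun (K : fieldType) (I : finType) (leI : rel I) := VFun {
  vdim : I -> nat;
  vmap : forall i j : I, 'M[K]_(vdim i, vdim j);
  vmap_id : forall i, vmap i i = 1%:M;
  vmap_comp : forall i j k, leI i j -> leI j k -> vmap i k = vmap i j *m vmap j k
}.

Definition is_nat (K : fieldType) (I : finType) (leI : rel I) (F G : vfun K leI)
  (f : forall i, 'M[K]_(vdim F i, vdim G i)) : Prop :=
  forall i j, leI i j -> vmap F i j *m f j = f i *m vmap G i j.

(* A functor P : J^op -> Fun(I, vect_K); pmor a b : P(b) -> P(a) for a <= b. *)
Record pfun (K : fieldType) (I : finType) (leI : rel I) (J : finType) (leJ : rel J) :=
  PFun {
  pobj : J -> vfun K leI;
  pmor : forall (a b : J) (i : I), 'M[K]_(vdim (pobj b) i, vdim (pobj a) i);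
  pmor_nat : forall a b, leJ a b -> is_nat (pmor a b);
  pmor_id : forall a i, pmor a a i = 1%:M;
  pmor_comp : forall a b c, leJ a b -> leJ b c ->
      forall i, pmor a c i = pmor b c i *m pmor a b i
}.

Section Unit.
Variables (K : fieldType) (I : finType) (leI : rel I) (J : finType) (leJ : rel J).
Variable P : pfun K leI leJ.

(* Via R L K(a,-) = Nat_I(P(-),P(a)), the unit eta_a at b is the linear map
   K(a,b) -> Nat_I(P(b),P(a)) sending c to c * P(a <= b) if a <= b
   (and the map from 0 otherwise). *)

Definition in_unit_image (a b : J)
  (f : forall i, 'M[K]_(vdim (pobj P b) i, vdim (pobj P a) i)) : Prop :=
  if leJ a b then exists c : K, forall i, f i = c *: pmor P a b i
  else forall i, f i = 0.

Definition unit_surjective (a b : J) : Prop :=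
  forall f : (forall i, 'M[K]_(vdim (pobj P b) i, vdim (pobj P a) i)),
    is_nat f -> @in_unit_image a b f.

Definition unit_injective (a b : J) : Prop :=
  leJ a b -> forall c : K, (forall i, c *: pmor P a b i = 0) -> c = 0.

Definition vfun_nonzero (F : vfun K leI) : Prop := exists i, vdim F i != 0%N.

Definition thin : Prop := forall a b, unit_surjective a b.

Definition flat : Prop :=
  forall a, vfun_nonzero (pobj P a) ->
    forall b, unit_injective a b /\ unit_surjective a b.
End Unit.

Definition sub_le (J : finType) (leJ : rel J) (L : {set J}) : rel {x : J | x \in L} :=
  fun x y => leJ (val x) (val y).

Section Restrict.
Variables (K : fieldType) (I : finType) (leI : rel I) (J : finType) (leJ : rel J).
Variables (P : pfun K leI leJ) (L : {set J}).

Definition restrict : pfun K leI (@sub_le J leJ L) :=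
  @PFun K I leI _ (@sub_le J leJ L) (fun x => pobj P (val x))
    (fun x y => pmor P (val x) (val y))
    (fun x y h => pmor_nat P h)
    (fun x => pmor_id P (val x))
    (fun x y z h1 h2 => pmor_comp P h1 h2).
End Restrict.

From mathcomp Require Import all_boot all_order all_algebra.

(* The unit of the restricted adjunction at (a, b) is the unit of the original
   one at (a, b): both are c |-> c * P(a <= b), with the same source and target.
   Thinness and flatness are conditions on each component separately, so they
   survive restriction to any set of objects. *)

Section Restriction.
Variables (K : fieldType) (I : finType) (leI : rel I) (J : finType) (leJ : rel J).
Variables (P : pfun K leI leJ) (L : {set J}).

Lemma unit_surjective_restrict (a b : {x : J | x \in L}) :
  unit_surjective (restrict P L) a b <-> unit_surjective P (val a) (val b).
Proof. by []. Qed.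

Lemma unit_injective_restrict (a b : {x : J | x \in L}) :
  unit_injective (restrict P L) a b <-> unit_injective P (val a) (val b).
Proof. by []. Qed.

Lemma thin_restrict : thin P -> thin (restrict P L).
Proof. by move=> thinP a b; apply/unit_surjective_restrict. Qed.

Lemma flat_restrict : flat P -> flat (restrict P L).
Proof.
move=> flatP a nz_a b; have [inj_ab surj_ab] := flatP (val a) nz_a (val b).
by split; [apply/unit_injective_restrict | apply/unit_surjective_restrict].
Qed.

End Restriction.

Theorem proposition5p9 (K : fieldType) (I : finType) (leI : rel I)
  (J : finType) (leJ : rel J) (P : pfun K leI leJ) :
  is_poset leI -> is_poset leJ ->
  (thin P -> forall L : {set J}, thin (restrict P L)) /\
  (flat P -> forall L : {set J}, flat (restrict P L)).
Proof.
move=> _ _; split=> [thinP L | flatP L].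
- exact: thin_restrict.
- exact: flat_restrict.
Qed.
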